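(* For every family $\mathcal F$ of edge-colored undirected graphs there is a family $\vec{\mathcal F}$ of edge-colored oriented graphs such that $\mathrm{Col}(\mathcal F)$ is polynomial-time equivalent to $\mathrm{Col}(\vec{\mathcal F})$, and $\mathrm{Ext}(\mathcal F)$ is polynomial-time equivalent to $\mathrm{Ext}(\vec{\mathcal F})$.
   Context: Edge colors come from a fixed finite set $[r]$. An edge-colored (undirected, resp. oriented) graph is $(G,\gamma)$ with $\gamma\colon E(G)\to[r]$, where for oriented graphs $E(G)$ is a set of arcs (ordered pairs, no loops, no pair of opposite arcs). $(G,\gamma)$ is $\mathcal F$-free if no $(F,\phi)\in\mathcal F$ admits a (graph, resp. arc-preserving digraph) homomorphism $h\colon F\to G$ with $\gamma(h(e))=\phi(e)$ for all edges $e$ of $F$. $\mathrm{Col}(\mathcal F)$: given a finite graph (resp. oriented graph) $X$, decide whether there is $\gamma\colon E(X)\to[r]$ with $(X,\gamma)$ $\mathcal F$-free. $\mathrm{Ext}(\mathcal F)$: given a finite graph (resp. oriented graph) $X$ and a partial map $\xi$ from a subset of $E(X)$ to $[r]$, decide whether there is $\gamma\colon E(X)\to[r]$ extending $\xi$ with $(X,\gamma)$ $\mathcal F$-free. *)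

From mathcomp Require Import all_boot.
Unset Implicit Arguments.
Unset Strict Implicit.
Unset Printing Implicit Defensive.

Record ugraph := UGraph {
  uv : nat;
  uadj : 'I_uv -> 'I_uv -> bool;
  uadj_sym : forall x y, uadj x y = uadj y x;
  uadj_irr : forall x, uadj x x = false }.

Record ograph := OGraph {
  ov : nat;
  oarc : 'I_ov -> 'I_ov -> bool;
  oarc_irr : forall x, oarc x x = false;
  oarc_asym : forall x y, oarc x y -> oarc y x = false }.

(* For undirected graphs
   the color of edge {x,y} is ucol x y = ucol y x; the value on non-edges
   is irrelevant. *)
Record ucgraph (r : nat) := UCGraph {
  ucg : ugraph;
  ucol : 'I_(uv ucg) -> 'I_(uv ucg) -> 'I_r;
  ucol_sym : forall x y, ucol x y = ucol y x }.

Record ocgraph (r : nat) := OCGraph {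
  ocg : ograph;
  ocol : 'I_(ov ocg) -> 'I_(ov ocg) -> 'I_r }.

Arguments ucg {r}. Arguments uadj {u}. Arguments oarc {o}. Arguments ucol {r}. Arguments ocg {r}. Arguments ocol {r}.

Definition uhom r (F : ucgraph r) (X : ugraph)
    (gam : 'I_(uv X) -> 'I_(uv X) -> 'I_r) (h : 'I_(uv (ucg F)) -> 'I_(uv X)) :=
  forall u v, uadj u v -> uadj (h u) (h v) /\ gam (h u) (h v) = ucol F u v.

Definition ohom r (F : ocgraph r) (X : ograph)
    (gam : 'I_(ov X) -> 'I_(ov X) -> 'I_r) (h : 'I_(ov (ocg F)) -> 'I_(ov X)) :=
  forall u v, oarc u v -> oarc (h u) (h v) /\ gam (h u) (h v) = ocol F u v.

Definition ufree r (Fam : ucgraph r -> Prop) (X : ugraph) gam :=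
  ~ exists F h, Fam F /\ uhom r F X gam h.
Definition ofree r (Fam : ocgraph r -> Prop) (X : ograph) gam :=
  ~ exists F h, Fam F /\ ohom r F X gam h.

Definition ucolorable r (Fam : ucgraph r -> Prop) (X : ugraph) :=
  exists gam : 'I_(uv X) -> 'I_(uv X) -> 'I_r,
    (forall x y, gam x y = gam y x) /\ ufree r Fam X gam.
Definition ocolorable r (Fam : ocgraph r -> Prop) (X : ograph) :=
  exists gam : 'I_(ov X) -> 'I_(ov X) -> 'I_r, ofree r Fam X gam.

(* Partial precolorings xi (None = uncolored), defined on edges only. *)
Definition upartial r (X : ugraph) (xi : 'I_(uv X) -> 'I_(uv X) -> option 'I_r) :=
  (forall x y, xi x y = xi y x) /\ (forall x y, ~~ uadj x y -> xi x y = None).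
Definition opartial r (X : ograph) (xi : 'I_(ov X) -> 'I_(ov X) -> option 'I_r) :=
  forall x y, ~~ oarc x y -> xi x y = None.

Definition uextendable r (Fam : ucgraph r -> Prop) (X : ugraph) xi :=
  exists gam : 'I_(uv X) -> 'I_(uv X) -> 'I_r,
    [/\ forall x y, gam x y = gam y x,
        forall x y c, xi x y = Some c -> gam x y = c
      & ufree r Fam X gam].
Definition oextendable r (Fam : ocgraph r -> Prop) (X : ograph) xi :=
  exists gam : 'I_(ov X) -> 'I_(ov X) -> 'I_r,
    (forall x y c, xi x y = Some c -> gam x y = c) /\ ofree r Fam X gam.

(*   n is written in unary (1^n 0), followed by one block for each    *)
(*   pair i < j of vertices in lexicographic order.                   *)

Definition pairs_enc n (blk : 'I_n -> 'I_n -> seq bool) : seq bool :=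
  nseq n true ++ false ::
  flatten (flatten [seq [seq blk i j | j <- filter (fun j : 'I_n => i < j) (enum 'I_n)] | i <- enum 'I_n]).

Definition onehot r (o : option 'I_r) : seq bool := [seq o == Some c | c <- enum 'I_r].

Definition enc_ucol (X : ugraph) := pairs_enc (uv X) (fun i j => [:: uadj i j]).
Definition enc_ocol (X : ograph) := pairs_enc (ov X) (fun i j => [:: oarc i j; oarc j i]).
Definition enc_uext r (X : ugraph) (xi : 'I_(uv X) -> 'I_(uv X) -> option 'I_r) :=
  pairs_enc (uv X) (fun i j => uadj i j :: onehot r (xi i j)).
Definition enc_oext r (X : ograph) (xi : 'I_(ov X) -> 'I_(ov X) -> option 'I_r) :=
  pairs_enc (ov X) (fun i j => oarc i j :: oarc j i :: onehot r (xi i j) ++ onehot r (xi j i)).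

Definition ColU r (Fam : ucgraph r -> Prop) (s : seq bool) : Prop :=
  exists X, enc_ucol X = s /\ ucolorable r Fam X.
Definition ColO r (Fam : ocgraph r -> Prop) (s : seq bool) : Prop :=
  exists X, enc_ocol X = s /\ ocolorable r Fam X.
Definition ExtU r (Fam : ucgraph r -> Prop) (s : seq bool) : Prop :=
  exists X xi, [/\ upartial r X xi, enc_uext r X xi = s & uextendable r Fam X xi].
Definition ExtO r (Fam : ocgraph r -> Prop) (s : seq bool) : Prop :=
  exists X xi, [/\ opartial r X xi, enc_oext r X xi = s & oextendable r Fam X xi].

Inductive move := MoveL | MoveR | Stay.

Record TM := MkTM {
  tm_state : finType;
  tm_start : tm_state;
  tm_halt : pred tm_state;
  tm_delta : tm_state -> option bool -> tm_state * option bool * move }.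

(* configuration: state, left part of tape (nearest cell first),
   scanned cell, right part of tape; cells beyond are blank (None). *)
Definition config (M : TM) := (tm_state M * seq (option bool) * option bool * seq (option bool))%type.

Definition tm_step (M : TM) (c : config M) : config M :=
  let: (q, l, a, rt) := c in
  if tm_halt M q then c else
  let: (q', b, m) := tm_delta M q a in
  match m with
  | Stay => (q', l, b, rt)
  | MoveL => (q', behead l, head None l, b :: rt)
  | MoveR => (q', b :: l, head None rt, behead rt)
  end.

Definition tm_init (M : TM) (x : seq bool) : config M :=
  (tm_start M, [::], head None (map Some x), behead (map Some x)).

Definition tm_run (M : TM) (t : nat) (x : seq bool) : config M :=
  iter t (tm_step M) (tm_init M x).

Fixpoint take_bits (s : seq (option bool)) : seq bool :=
  if s is Some b :: s' then b :: take_bits s' else [::].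

Definition tm_output (M : TM) (c : config M) : seq bool :=
  let: (_, _, a, rt) := c in take_bits (a :: rt).

Definition tm_halted (M : TM) (c : config M) : bool :=
  let: (q, _, _, _) := c in tm_halt M q.

Definition poly_time_computable (f : seq bool -> seq bool) : Prop :=
  exists (M : TM) (k d : nat), forall x, exists t,
    t <= k * (size x) ^ d + k /\
    tm_halted M (tm_run M t x) /\ tm_output M (tm_run M t x) = f x.

Definition poly_reduces (A B : seq bool -> Prop) : Prop :=
  exists f, poly_time_computable f /\ forall x, A x <-> B (f x).

Definition poly_equiv (A B : seq bool -> Prop) : Prop :=
  poly_reduces A B /\ poly_reduces B A.

(* Orienting every edge from its smaller to its larger endpoint turns undirected
   instances into oriented ones, and forgetting orientations turns them back.  Let
   OFam consist of the edge-colored oriented graphs whose underlying colored graph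
   lies in Fam.  An oriented coloring is OFam-free iff its symmetrization is
   Fam-free: a homomorphism from some F in Fam into the underlying graph orients F
   by pulling back the arcs, and a homomorphism from a member of OFam is also one
   from its underlying graph.  On the encodings, both translations rewrite the
   block of each vertex pair independently, so they are computed by a finite-state
   transducer that also checks that the blocks are well formed; a Turing machine
   runs such a transducer in quadratic time, appending each output block at the
   end of its tape. *)

From Stdlib Require Import ZArith Lia FunctionalExtensionality ProofIrrelevance.
From HB Require Import structures.
From mathcomp Require Import all_boot zify.
Set Implicit Arguments. Unset Strict Implicit.

(** * Turing machines running finite-state transducers *)

Section TapeSimulation.
Variable M : TM.

Definition tape := Z -> option bool.

Definition tape_write (T : tape) (h : Z) (b : option bool) : tape :=
  fun z => if Z.eqb z h then b else T z.

Definition head_shift (m : move) : Z :=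
  match m with MoveL => (-1)%Z | MoveR => 1%Z | Stay => 0%Z end.

(* The list configurations of [tm_step] are simulated by configurations with a
   Z-indexed tape and an absolute head position, where head moves are arithmetic. *)
Definition zconfig := (tm_state M * tape * Z)%type.

Definition zstep (c : zconfig) : zconfig :=
  let: (q, T, h) := c in
  if tm_halt M q then c else
  let: (q', b, m) := tm_delta M q (T h) in (q', tape_write T h b, (h + head_shift m)%Z).

Definition zrepr (c : config M) (zc : zconfig) : Prop :=
  let: (q, l, a, rt) := c in let: (q', T, h) := zc in
  [/\ q = q', a = T h, (forall i : nat, nth None rt i = T (h + 1 + Z.of_nat i)%Z)
    & (forall i : nat, nth None l i = T (h - 1 - Z.of_nat i)%Z)].

Lemma tape_write_eq T h b z : z = h -> tape_write T h b z = b.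
Proof. by move=> ->; rewrite /tape_write Z.eqb_refl. Qed.

Lemma tape_write_ne T h b z : z <> h -> tape_write T h b z = T z.
Proof. by move=> ne; rewrite /tape_write; case: (Z.eqb_spec z h). Qed.

Lemma tape_write_id T h : tape_write T h (T h) = T.
Proof.
by apply: functional_extensionality => z; rewrite /tape_write; case: (Z.eqb_spec z h) => [->|].
Qed.

Lemma zrepr_step c zc : zrepr c zc -> zrepr (tm_step M c) (zstep zc).
Proof.
case: c => [[[q l] a] rt]; case: zc => [[q' T] h] [<- -> Hr Hl] /=.
case: (tm_halt M q) => //.
case: (tm_delta M q (T h)) => [[q2 b] m].
case: m; split => //=.
- by rewrite -[head _ _]/(nth None l 0) Hl tape_write_ne; [f_equal; lia | lia].
- case=> [|i] /=; first by rewrite tape_write_eq //; lia.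
  by rewrite Hr tape_write_ne; [f_equal; lia | lia].
- by move=> i; rewrite nth_behead Hl tape_write_ne; [f_equal; lia | lia].
- by rewrite -[head _ _]/(nth None rt 0) Hr tape_write_ne; [f_equal; lia | lia].
- by move=> i; rewrite nth_behead Hr tape_write_ne; [f_equal; lia | lia].
- case=> [|i] /=; first by rewrite tape_write_eq //; lia.
  by rewrite Hl tape_write_ne; [f_equal; lia | lia].
- by rewrite tape_write_eq //; lia.
- by move=> i; rewrite Hr tape_write_ne; [f_equal; lia | lia].
- by move=> i; rewrite Hl tape_write_ne; [f_equal; lia | lia].
Qed.

Lemma zrepr_iter n c zc : zrepr c zc -> zrepr (iter n (tm_step M) c) (iter n zstep zc).
Proof. by elim: n => //= n IH /IH /zrepr_step. Qed.

Lemma take_bits_tape (T : tape) w : forall (s : seq (option bool)) h,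
  (forall i : nat, nth None s i = T (h + Z.of_nat i)%Z) ->
  (forall i, i < size w -> T (h + Z.of_nat i)%Z = Some (nth false w i)) ->
  T (h + Z.of_nat (size w))%Z = None -> take_bits s = w.
Proof.
elim: w => [|c w IH] [|a s] h Hs Hin Hend //=.
- by move: (Hs 0); rewrite /= Hend => ->.
- by move: (Hs 0) (Hin 0 erefl) => /= <-.
- move: (Hs 0) (Hin 0 erefl) => /= ->; rewrite Z.add_0_r => ->; congr cons.
  apply: (IH s (h + 1)%Z).
  + by move=> i; move: (Hs i.+1) => /= ->; f_equal; lia.
  + move=> i Hi; have -> : (h + 1 + Z.of_nat i = h + Z.of_nat i.+1)%Z by lia.
    by rewrite (Hin i.+1).
  + by rewrite -Hend; f_equal; simpl size; lia.
Qed.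

Lemma zrepr_output q l a rt T h w : zrepr (q, l, a, rt) (q, T, h) ->
  (forall i, i < size w -> T (h + Z.of_nat i)%Z = Some (nth false w i)) ->
  T (h + Z.of_nat (size w))%Z = None -> tm_output M (q, l, a, rt) = w.
Proof.
move=> [_ Ha Hr _] Hin Hend /=; apply: (@take_bits_tape T w (a :: rt) h) => //.
case=> [|i] /=; first by rewrite Ha Z.add_0_r.
by rewrite Hr; f_equal; lia.
Qed.

Definition reaches (c c' : zconfig) n := iter n zstep c = c'.

Lemma reaches_trans c1 c2 c3 n m : reaches c1 c2 n -> reaches c2 c3 m -> reaches c1 c3 (n + m).
Proof. by rewrite /reaches addnC iterD => ->. Qed.

Lemma reaches_step q T h q' b m c n :
  tm_halt M q = false -> tm_delta M q (T h) = (q', b, m) ->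
  reaches (q', tape_write T h b, (h + head_shift m)%Z) c n -> reaches (q, T, h) c n.+1.
Proof. by move=> Hq Hd; rewrite /reaches iterSr /= Hq Hd. Qed.

Lemma reaches_blank q q' m c n T h :
  tm_halt M q = false -> T h = None -> tm_delta M q None = (q', None, m) ->
  reaches (q', T, (h + head_shift m)%Z) c n -> reaches (q, T, h) c n.+1.
Proof.
move=> Hq Th Hd R; have Hd' : tm_delta M q (T h) = (q', None, m) by rewrite Th.
by apply: reaches_step Hq Hd' _; rewrite -Th tape_write_id.
Qed.

Lemma scan_right q : tm_halt M q = false -> (forall c, tm_delta M q (Some c) = (q, Some c, MoveR)) ->
  forall m T h, (forall i, i < m -> T (h + Z.of_nat i)%Z <> None) ->
  reaches (q, T, h) (q, T, h + Z.of_nat m)%Z m.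
Proof.
move=> Hq Hd; elim=> [|m IH] T h HT; first by rewrite /reaches /= Z.add_0_r.
have := HT 0 erefl; rewrite Z.add_0_r; case E: (T h) => [c|] // _.
apply: (reaches_step Hq (_ : _ = (q, Some c, _))); first by rewrite E Hd.
rewrite -E tape_write_id.
have -> : (h + Z.of_nat m.+1 = (h + head_shift MoveR) + Z.of_nat m)%Z by rewrite /=; lia.
apply: IH => i Hi; have := HT i.+1 Hi.
by have -> : (h + head_shift MoveR + Z.of_nat i = h + Z.of_nat i.+1)%Z by rewrite /=; lia.
Qed.

Lemma scan_left q : tm_halt M q = false -> (forall c, tm_delta M q (Some c) = (q, Some c, MoveL)) ->
  forall m T h, (forall i, i < m -> T (h - Z.of_nat i)%Z <> None) ->
  reaches (q, T, h) (q, T, h - Z.of_nat m)%Z m.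
Proof.
move=> Hq Hd; elim=> [|m IH] T h HT; first by rewrite /reaches /= Z.sub_0_r.
have := HT 0 erefl; rewrite Z.sub_0_r; case E: (T h) => [c|] // _.
apply: (reaches_step Hq (_ : _ = (q, Some c, _))); first by rewrite E Hd.
rewrite -E tape_write_id.
have -> : (h - Z.of_nat m.+1 = (h + head_shift MoveL) - Z.of_nat m)%Z by rewrite /=; lia.
apply: IH => i Hi; have := HT i.+1 Hi.
by have -> : (h + head_shift MoveL - Z.of_nat i = h - Z.of_nat i.+1)%Z by rewrite /=; lia.
Qed.

End TapeSimulation.

Section MealyRun.
Variables (S : Type) (step : S -> bool -> S * seq bool).

Fixpoint mealy_run (s : S) (x : seq bool) : S * seq bool :=
  if x is b :: x' then
    let r := mealy_run (step s b).1 x' in (r.1, (step s b).2 ++ r.2)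
  else (s, [::]).

Lemma mealy_run_cat s x y :
  mealy_run s (x ++ y) =
  ((mealy_run (mealy_run s x).1 y).1, (mealy_run s x).2 ++ (mealy_run (mealy_run s x).1 y).2).
Proof.
elim: x s => [|b x IH] s /=; first by case: (mealy_run s y).
by rewrite IH catA.
Qed.

End MealyRun.

Definition layout (u w : seq bool) := map Some u ++ None :: map Some w.

Definition word_tape (u w : seq bool) (h : Z) : tape :=
  fun z => if (z <? h)%Z then None else nth None (layout u w) (Z.to_nat (z - h)).

Lemma word_tape_at u w h z (i : nat) :
  z = (h + Z.of_nat i)%Z -> word_tape u w h z = nth None (layout u w) i.
Proof.
move=> ->; rewrite /word_tape; case: (Z.ltb_spec (h + Z.of_nat i) h) => [|_]; first lia.
by rewrite (_ : h + Z.of_nat i - h = Z.of_nat i)%Z ?Nat2Z.id //; lia.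
Qed.

Lemma word_tape_lt u w h z : (z < h)%Z -> word_tape u w h z = None.
Proof. by move=> H; rewrite /word_tape; case: (Z.ltb_spec z h) => //; lia. Qed.

Lemma nth_layout_in u w i : i < size u -> nth None (layout u w) i = Some (nth false u i).
Proof. by move=> H; rewrite nth_cat size_map H (nth_map false). Qed.

Lemma nth_layout_sep u w : nth None (layout u w) (size u) = None.
Proof. by rewrite nth_cat size_map ltnn subnn. Qed.

Lemma nth_layout_out u w i : i < size w -> nth None (layout u w) (size u + i).+1 = Some (nth false w i).
Proof.
move=> H; rewrite nth_cat size_map ltnNge ltnW ?leq_addr //=.
by rewrite (_ : (size u + i).+1 - size u = i.+1)%N /= ?(nth_map false) //; lia.
Qed.

Lemma nth_layout_end u w i : nth None (layout u w) (size u + size w + i).+1 = None.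
Proof. by rewrite nth_default // size_cat /= !size_map; lia. Qed.

Lemma word_tape_erase b u w h : tape_write (word_tape (b :: u) w h) h None = word_tape u w (h + 1).
Proof.
apply: functional_extensionality => z.
case: (Z.eqb_spec z h) => [->|ne]; first by rewrite tape_write_eq // word_tape_lt //; lia.
rewrite tape_write_ne //; case: (Z.ltb_spec z h) => lt; first by rewrite !word_tape_lt //; lia.
rewrite (@word_tape_at _ _ _ z (Z.to_nat (z - h))); last lia.
rewrite (@word_tape_at _ _ _ z (Z.to_nat (z - (h + 1)))); last lia.
by have -> : Z.to_nat (z - h) = (Z.to_nat (z - (h + 1))).+1 by lia.
Qed.

Lemma word_tape_append u w h c :
  tape_write (word_tape u w h) (h + Z.of_nat (size u + size w).+1)%Z (Some c) =
  word_tape u (rcons w c) h.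
Proof.
have Lr : layout u (rcons w c) = rcons (layout u w) (Some c) by rewrite /layout -!cats1 map_cat -catA.
apply: functional_extensionality => z.
case: (Z.eqb_spec z (h + Z.of_nat (size u + size w).+1)) => [->|ne].
  rewrite tape_write_eq // (word_tape_at _ _ (erefl _)) Lr nth_rcons size_cat /= !size_map.
  by rewrite addnS ltnn eqxx.
rewrite tape_write_ne //; case: (Z.ltb_spec z h) => lt; first by rewrite !word_tape_lt //; lia.
rewrite !(@word_tape_at _ _ _ z (Z.to_nat (z - h))); try lia.
rewrite Lr nth_rcons size_cat /= !size_map.
case: ltnP => // H; rewrite nth_default ?size_cat /= ?size_map //.
by case: eqP => //; lia.
Qed.

Section MealyMachine.
Variables (S : finType) (s0 : S) (step : S -> bool -> S * seq bool) (accept : pred S) (B : nat).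
Hypothesis size_step_out : forall s b, size (step s b).2 <= B.

Definition mealy_fun x := if accept (mealy_run step s0 x).1 then (mealy_run step s0 x).2 else [::].

(* The tape holds the unread input, a blank, and the output written so far.  A
   round erases the next input bit, walks right to the end of the output, appends
   the output of that step, and walks back to the new start of the input. *)
Inductive mstate :=
  | Read of S | SkipIn of S & bool | SkipOut of S & bool | Write of S & bool & 'I_B.+1
  | BackOut of S | BackIn of S | Done.

Local Notation mcode := (S + (S * bool) + (S * bool) + (S * bool * 'I_B.+1) + S + S + unit)%type.

Definition mstate_code (q : mstate) : mcode :=
  match q with
  | Read s => inl (inl (inl (inl (inl (inl s)))))
  | SkipIn s b => inl (inl (inl (inl (inl (inr (s, b))))))
  | SkipOut s b => inl (inl (inl (inl (inr (s, b)))))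
  | Write s b k => inl (inl (inl (inr (s, b, k))))
  | BackOut s => inl (inl (inr s))
  | BackIn s => inl (inr s)
  | Done => inr tt
  end.

Definition mstate_decode (c : mcode) : mstate :=
  match c with
  | inl (inl (inl (inl (inl (inl s))))) => Read s
  | inl (inl (inl (inl (inl (inr (s, b)))))) => SkipIn s b
  | inl (inl (inl (inl (inr (s, b))))) => SkipOut s b
  | inl (inl (inl (inr (s, b, k)))) => Write s b k
  | inl (inl (inr s)) => BackOut s
  | inl (inr s) => BackIn s
  | inr _ => Done
  end.

Lemma mstate_codeK : cancel mstate_code mstate_decode. Proof. by case. Qed.

HB.instance Definition _ := Finite.copy mstate (can_type mstate_codeK).

Definition write_step s b (k : nat) : mstate * option bool * move :=
  let o := (step s b).2 in
  if k.+1 < size o then (Write s b (inord k.+1), Some (nth false o k), MoveR)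
  else (BackOut (step s b).1, Some (nth false o k), MoveL).

(* At the final blank the machine halts, moving onto the output only if it accepts. *)
Definition mdelta (q : mstate) (a : option bool) : mstate * option bool * move :=
  match q, a with
  | Read s, None => (Done, None, if accept s then MoveR else Stay)
  | Read s, Some b =>
      if (step s b).2 == [::] then (Read (step s b).1, None, MoveR) else (SkipIn s b, None, MoveR)
  | SkipIn s b, Some c => (SkipIn s b, Some c, MoveR)
  | SkipIn s b, None => (SkipOut s b, None, MoveR)
  | SkipOut s b, Some c => (SkipOut s b, Some c, MoveR)
  | SkipOut s b, None => write_step s b 0
  | Write s b k, _ => write_step s b k
  | BackOut s, Some c => (BackOut s, Some c, MoveL)
  | BackOut s, None => (BackIn s, None, MoveL)
  | BackIn s, Some c => (BackIn s, Some c, MoveL)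
  | BackIn s, None => (Read s, None, MoveR)
  | Done, _ => (Done, a, Stay)
  end.

Definition mhalt (q : mstate) : bool := if q is Done then true else false.

Definition mealy_tm := MkTM mstate (Read s0) mhalt mdelta.

Local Notation mreaches := (@reaches mealy_tm).

Lemma skip_to_output_end s b u w h :
  mreaches (SkipIn s b, word_tape u w h, h)
    (SkipOut s b, word_tape u w h, h + Z.of_nat (size u + size w).+1)%Z
    (size u + (size w).+1).
Proof.
set T := word_tape u w h.
apply: reaches_trans (scan_right (M := mealy_tm) (q := SkipIn s b) erefl (fun _ => erefl) _) _.
  by move=> i Hi; rewrite /T (word_tape_at _ _ (erefl _)) nth_layout_in.
apply: (@reaches_blank mealy_tm (SkipIn s b) (SkipOut s b) MoveR) => //.
  by rewrite /T (word_tape_at _ _ (erefl _)) nth_layout_sep.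
have -> : (h + Z.of_nat (size u + size w).+1 =
           (h + Z.of_nat (size u) + head_shift MoveR) + Z.of_nat (size w))%Z by rewrite /=; lia.
apply: (scan_right (M := mealy_tm) (q := SkipOut s b) erefl (fun _ => erefl)) => i Hi.
rewrite /T (@word_tape_at _ _ _ _ (size u + i).+1); last by rewrite /=; lia.
by rewrite nth_layout_out.
Qed.

Lemma write_phase s b u w h : forall j k q, k + j.+1 = size (step s b).2 -> mhalt q = false ->
  mdelta q (word_tape u (w ++ take k (step s b).2) h (h + Z.of_nat (size u + size w + k).+1)%Z) =
    write_step s b k ->
  mreaches (q, word_tape u (w ++ take k (step s b).2) h, (h + Z.of_nat (size u + size w + k).+1)%Z)
    (BackOut (step s b).1, word_tape u (w ++ (step s b).2) h,
     (h + Z.of_nat (size u + size w + size (step s b).2) - 1)%Z) j.+1.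
Proof.
set o := (step s b).2.
have Eo k : k <= size o -> size (w ++ take k o) = size w + k.
  by move=> Hk; rewrite size_cat size_take; case: ltnP => //; lia.
elim=> [|j IH] k q Hk Hq; rewrite /write_step -/o.
- rewrite ifN; last by rewrite -Hk addn1 ltnn.
  move=> Hd; apply: (reaches_step (M := mealy_tm) Hq Hd).
  have := word_tape_append u (w ++ take k o) h (nth false o k); rewrite Eo ?addnA; last lia.
  move=> ->; rewrite rcons_cat -take_nth; last lia.
  by rewrite -addn1 Hk take_size /reaches /=; congr (_, _, _); lia.
- rewrite ifT; last by rewrite -Hk; lia.
  move=> Hd; apply: (reaches_step (M := mealy_tm) Hq Hd).
  have := word_tape_append u (w ++ take k o) h (nth false o k); rewrite Eo ?addnA; last lia.
  move=> ->; rewrite rcons_cat -take_nth; last lia.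
  have -> : (h + Z.of_nat (size u + size w + k).+1 + head_shift MoveR
            = h + Z.of_nat (size u + size w + k.+1).+1)%Z by rewrite /=; lia.
  apply: IH => //; first lia.
  rewrite /= inordK //; have := size_step_out s b; rewrite -/o; lia.
Qed.

Lemma return_to_input s u w h : 0 < size w ->
  mreaches (BackOut s, word_tape u w h, (h + Z.of_nat (size u + size w) - 1)%Z)
    (Read s, word_tape u w h, h) ((size w).-1 + (size u + 1).+1).
Proof.
move=> w0; set T := word_tape u w h.
apply: reaches_trans (scan_left (M := mealy_tm) (q := BackOut s) erefl (fun _ => erefl) _) _.
  move=> i Hi; rewrite /T (@word_tape_at _ _ _ _ (size u + (size w - 2 - i)).+1); last lia.
  by rewrite nth_layout_out //; lia.
apply: (@reaches_blank mealy_tm (BackOut s) (BackIn s) MoveL) => //.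
  by rewrite /T (@word_tape_at _ _ _ _ (size u)) ?nth_layout_sep //; lia.
apply: reaches_trans (scan_left (M := mealy_tm) (q := BackIn s) erefl (fun _ => erefl) _) _.
  move=> i Hi; rewrite /T (@word_tape_at _ _ _ _ (size u - 1 - i)); last by rewrite /=; lia.
  by rewrite nth_layout_in //; lia.
apply: (@reaches_blank mealy_tm (BackIn s) (Read s) MoveR) => //.
  by rewrite /T word_tape_lt //=; lia.
by rewrite /reaches /=; congr (_, _, _); lia.
Qed.

Lemma mealy_round s b u w h : exists n, n <= 2 * size u + 2 * size w + 2 * B + 4 /\
  mreaches (Read s, word_tape (b :: u) w h, h)
    (Read (step s b).1, word_tape u (w ++ (step s b).2) (h + 1), (h + 1)%Z) n.
Proof.
have Hd : mdelta (Read s) (word_tape (b :: u) w h h) =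
   (if (step s b).2 == [::] then Read (step s b).1 else SkipIn s b, None, MoveR).
  by rewrite (@word_tape_at _ _ _ h 0) /=; [case: eqP | lia].
have Hsz := size_step_out s b.
case: eqP Hd => Ho Hd.
  exists 1; split; first lia.
  by apply: (reaches_step (M := mealy_tm) (q := Read s) erefl Hd); rewrite word_tape_erase Ho cats0.
set o := (step s b).2 in Ho Hsz *.
set T := word_tape u w (h + 1); set T' := word_tape u (w ++ o) (h + 1).
have o0 : 0 < size o by case: (o) Ho.
have R1 : mreaches (Read s, word_tape (b :: u) w h, h)
    (SkipOut s b, T, (h + 1 + Z.of_nat (size u + size w).+1)%Z) (size u + (size w).+1).+1.
  apply: (reaches_step (M := mealy_tm) (q := Read s) erefl Hd).
  by rewrite word_tape_erase; apply: skip_to_output_end.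
have R2 : mreaches (SkipOut s b, T, (h + 1 + Z.of_nat (size u + size w).+1)%Z)
    (BackOut (step s b).1, T', (h + 1 + Z.of_nat (size u + size (w ++ o)) - 1)%Z) (size o).
  have := write_phase (s := s) (b := b) (u := u) (w := w) (h := h + 1)
    (j := (size o).-1) (k := 0) (q := SkipOut s b).
  rewrite take0 cats0 addn0 prednK // size_cat addnA; apply => //.
  by rewrite (word_tape_at _ _ (erefl _)) -(addn0 (size u + size w)) nth_layout_end.
have R3 := return_to_input (step s b).1 u (h + 1) (_ : 0 < size (w ++ o)).
exists ((size u + (size w).+1).+1 + size o + ((size (w ++ o)).-1 + (size u + 1).+1)); split.
  by rewrite size_cat; lia.
by apply: reaches_trans (reaches_trans R1 R2) (R3 _); rewrite size_cat; lia.
Qed.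

Lemma mealy_rounds x : forall s w h, exists n,
  n <= size x * (2 * size x + 2 * size w + 2 * B * size x + 6 * B + 8) /\
  mreaches (Read s, word_tape x w h, h)
    (Read (mealy_run step s x).1, word_tape [::] (w ++ (mealy_run step s x).2) (h + Z.of_nat (size x)),
     (h + Z.of_nat (size x))%Z) n.
Proof.
elim: x => [|b x IH] s w h.
  by exists 0; split => //; rewrite /= cats0 Z.add_0_r.
have [n1 [Hn1 R1]] := mealy_round s b x w h.
have [n2 [Hn2 R2]] := IH (step s b).1 (w ++ (step s b).2) (h + 1)%Z.
exists (n1 + n2); split.
  have Hb := size_step_out s b; move: Hn2; rewrite size_cat /=.
  set X := size x; set O := size w; set P := size (step s b).2 in Hb *.
  move=> Hn2.
  have : X * (2 * X + 2 * (O + P) + 2 * B * X + 6 * B + 8) <=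
         X * (2 * X + 2 * O + 2 * B * X + 8 * B + 8).
    by apply: leq_mul => //; lia.
  nia.
apply: (reaches_trans R1); move: R2; rewrite /= catA.
by rewrite (_ : h + 1 + Z.of_nat (size x) = h + Z.of_nat (size x).+1)%Z //; lia.
Qed.

Lemma mealy_tm_init x : zrepr (tm_init mealy_tm x) (Read s0, word_tape x [::] 0%Z, 0%Z).
Proof.
split => //.
- by rewrite (@word_tape_at _ _ _ _ 0) //; case: x.
- move=> i; rewrite (@word_tape_at _ _ _ _ i.+1); last lia.
  rewrite nth_behead nth_cat size_map; case: ltnP => // H.
  rewrite nth_default ?size_map; last lia.
  by case: (i.+1 - size x) => [|[]].
- by move=> i; rewrite word_tape_lt ?nth_nil //; lia.
Qed.

Theorem mealy_fun_poly : poly_time_computable mealy_fun.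
Proof.
exists mealy_tm, (8 * B + 10), 2 => x.
have [n [Hn R]] := mealy_rounds x s0 [::] 0%Z.
set sf := (mealy_run step s0 x).1 in R; set o := (mealy_run step s0 x).2 in R.
set h := (0 + Z.of_nat (size x))%Z in R.
exists n.+1; split.
  rewrite expnS expn1; have : size x <= size x * size x by case: (size x) => //= k; rewrite leq_pmulr.
  move: Hn; rewrite /= muln0 addn0; nia.
have Hh : word_tape [::] o h h = None by rewrite (@word_tape_at _ _ _ _ 0) ?Z.add_0_r.
have Rf : mreaches (Read s0, word_tape x [::] 0, 0%Z)
    (Done, word_tape [::] o h, (h + head_shift (if accept sf then MoveR else Stay))%Z) n.+1.
  by rewrite /reaches iterS R /= Hh -Hh tape_write_id.
have := zrepr_iter n.+1 (mealy_tm_init x); rewrite /tm_run Rf.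
case: (iter _ _ _) => [[[q l] a] rt] Hrep; case: (Hrep) => Eq _ _ _; subst q.
split; first by [].
rewrite /mealy_fun -/sf -/o; case: (accept sf) Hrep => Hrep.
- apply: (zrepr_output Hrep).
  + move=> i Hi; rewrite (@word_tape_at _ _ _ _ i.+1) /=; last lia.
    by rewrite (nth_map false).
  + by rewrite (@word_tape_at _ _ _ _ (size o).+1) ?nth_default //= ?size_map //; lia.
- by apply: (zrepr_output (w := [::]) Hrep); rewrite /= !Z.add_0_r.
Qed.

End MealyMachine.

Lemma insub_bseqK n (T : Type) (s : seq T) : size s <= n -> insub_bseq n s = s :> seq T.
Proof. by move=> Hs; rewrite /insub_bseq insubdK. Qed.

Section BlockTransducer.
Variables (p : nat) (valid : pred (seq bool)) (g : seq bool -> seq bool) (q : nat).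
Hypothesis size_g : forall w, size w = p.+1 -> size (g w) = q.

(* Copies a unary prefix [1^n 0], then replaces each block [w] of [p.+1] bits by
   [g w]; the input is rejected (mapped to [[::]]) if some block is not [valid]
   or the last block is incomplete. *)
Inductive bstate := Reject | Prefix | Block of p.-bseq bool.

Definition bstate_code (st : bstate) : option (option (p.-bseq bool)) :=
  match st with Reject => None | Prefix => Some None | Block w => Some (Some w) end.

Definition bstate_decode (c : option (option (p.-bseq bool))) : bstate :=
  match c with None => Reject | Some None => Prefix | Some (Some w) => Block w end.

Lemma bstate_codeK : cancel bstate_code bstate_decode. Proof. by case. Qed.

HB.instance Definition _ := Finite.copy bstate (can_type bstate_codeK).

Definition good_block w := (size w == p.+1) && valid w.

Definition block_step (st : bstate) (b : bool) : bstate * seq bool :=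
  match st with
  | Reject => (Reject, [::])
  | Prefix => if b then (Prefix, [:: true]) else (Block [bseq], [:: false])
  | Block buf =>
      let w := rcons buf b in
      if size w == p.+1 then (if valid w then (Block [bseq], g w) else (Reject, [::]))
      else (Block (insub_bseq p w), [::])
  end.

Definition block_accept (st : bstate) : bool := if st is Block buf then nilp buf else false.

Definition block_map := mealy_fun Prefix block_step block_accept.

Lemma block_map_poly : poly_time_computable block_map.
Proof.
apply: (@mealy_fun_poly _ _ _ _ (maxn q 1)) => -[||buf] b /=.
- by [].
- by case: b; rewrite leq_maxr.
- case: eqP => [E|_] //; case: ifP => //= _.
  by rewrite size_g ?leq_maxl //; apply/eqP; rewrite E.
Qed.

Lemma mealy_run_reject x : mealy_run block_step Reject x = (Reject, [::]).
Proof. by elim: x => //= b x ->. Qed.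

Lemma mealy_run_prefix n y :
  mealy_run block_step Prefix (nseq n true ++ false :: y) =
  ((mealy_run block_step (Block [bseq]) y).1,
   nseq n true ++ false :: (mealy_run block_step (Block [bseq]) y).2).
Proof. by elim: n => [|n IH] /=; last rewrite IH. Qed.

Lemma mealy_run_unary n : mealy_run block_step Prefix (nseq n true) = (Prefix, nseq n true).
Proof. by elim: n => [|n IH] //=; rewrite IH. Qed.

Lemma mealy_run_buffer (buf : p.-bseq bool) y : size buf + size y <= p.+1 ->
  mealy_run block_step (Block buf) y =
  if size buf + size y == p.+1 then
    (if valid (buf ++ y) then (Block [bseq], g (buf ++ y)) else (Reject, [::]))
  else (Block (insub_bseq p (buf ++ y)), [::]).
Proof.
elim: y buf => [|b y IH] buf /= Hs.
  rewrite addn0 cats0 ifN_eq; last by have := size_bseq buf; lia.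
  by congr (Block _, _); apply: val_inj => /=; rewrite insub_bseqK ?size_bseq.
rewrite size_rcons; case: eqP => [E|NE].
  have -> : y = [::] by case: (y) Hs => // c y0 /=; lia.
  by rewrite /= addn1 E eqxx cats1; case: (valid _) => /=; rewrite ?cats0.
rewrite /= IH insub_bseqK ?size_rcons; try lia.
by rewrite cat_rcons addSnnS; case: ifP => // _; case: ifP.
Qed.

Lemma mealy_run_block w : size w = p.+1 ->
  mealy_run block_step (Block [bseq]) w = if valid w then (Block [bseq], g w) else (Reject, [::]).
Proof.
by move=> Hw; rewrite mealy_run_buffer //= Hw ?eqxx.
Qed.

Lemma mealy_run_good_blocks bs : all good_block bs ->
  mealy_run block_step (Block [bseq]) (flatten bs) = (Block [bseq], flatten (map g bs)).
Proof.
elim: bs => //= w bs IH /andP [/andP [/eqP Hw Hv] Hbs].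
by rewrite mealy_run_cat mealy_run_block // Hv /= IH.
Qed.

Lemma block_map_blocks n bs : all good_block bs ->
  block_map (nseq n true ++ false :: flatten bs) = nseq n true ++ false :: flatten (map g bs).
Proof. by move=> H; rewrite /block_map /mealy_fun mealy_run_prefix mealy_run_good_blocks. Qed.

Lemma mealy_run_accepted y : block_accept (mealy_run block_step (Block [bseq]) y).1 ->
  exists2 bs, y = flatten bs /\ all good_block bs &
    (mealy_run block_step (Block [bseq]) y).2 = flatten (map g bs).
Proof.
elim: {y}(size y) {-2}y (leqnn (size y)) => [|m IH] y Hy.
  by case: y Hy => // _ _; exists [::].
case: (ltnP (size y) p.+1) => Hp.
  rewrite mealy_run_buffer /= ?add0n; last lia.
  rewrite ifN_eq /= ?insub_bseqK; try lia.
  by move=> /nilP ->; exists [::].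
rewrite -(cat_take_drop p.+1 y) mealy_run_cat mealy_run_block; last first.
  by rewrite size_take; case: ltnP => //; lia.
case V: (valid _); last by rewrite /= mealy_run_reject.
move=> /IH [|bs [E A] O]; first by rewrite size_drop; lia.
exists (take p.+1 y :: bs); last by rewrite /= O.
split; first by rewrite /= -E cat_take_drop.
by rewrite /= A andbT /good_block V andbT size_take; case: ltnP => // H; apply/eqP; lia.
Qed.

Lemma block_map_inv s : block_map s <> [::] -> exists n bs,
  [/\ s = nseq n true ++ false :: flatten bs, all good_block bs
    & block_map s = nseq n true ++ false :: flatten (map g bs)].
Proof.
have [[n [y ->]]|[n ->]] : (exists n y, s = nseq n true ++ false :: y) \/ exists n, s = nseq n true.
- elim: s => [|[] s IH]; first by right; exists 0.
  + by case: IH => [[n [y ->]]|[n ->]]; [left; exists n.+1, y | right; exists n.+1].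
  + by left; exists 0, s.
- rewrite /block_map /mealy_fun mealy_run_prefix; case: ifP => // /mealy_run_accepted [bs [-> A] O] _.
  by exists n, bs; rewrite O.
- by rewrite /block_map /mealy_fun mealy_run_unary.
Qed.

End BlockTransducer.

(** * Encodings of vertex pairs *)

Lemma map_nth_index (T : eqType) (U : Type) (x0 : U) (s : seq T) (t : seq U) :
  uniq s -> size t = size s -> [seq nth x0 t (index x s) | x <- s] = t.
Proof.
elim: s t => [|x s IH] [|y t] //= /andP [xs Us] [St]; rewrite eqxx; congr cons.
rewrite -[RHS](IH t Us St); apply/eq_in_map => z zs /=.
by case: eqP => // Exz; rewrite Exz zs in xs.
Qed.

Section ConstantSize.
Variables (T : Type) (q : nat).

Lemma shape_const (ss : seq (seq T)) : all (fun w => size w == q) ss -> shape ss = nseq (size ss) q.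
Proof. by elim: ss => //= w ss IH /andP [/eqP -> /IH ->]. Qed.

Lemma size_flatten_const (ss : seq (seq T)) :
  all (fun w => size w == q) ss -> size (flatten ss) = q * size ss.
Proof. by move=> A; rewrite size_flatten shape_const // sumn_nseq mulnC. Qed.

Lemma flatten_inj_const (ss ss' : seq (seq T)) :
  all (fun w => size w == q) ss -> all (fun w => size w == q) ss' ->
  size ss = size ss' -> flatten ss = flatten ss' -> ss = ss'.
Proof.
move=> A A' S E.
by rewrite -(flattenK ss) -(flattenK ss') (shape_const A) (shape_const A') S E.
Qed.

End ConstantSize.

Lemma unary_prefix_inj n m (x y : seq bool) :
  nseq n true ++ false :: x = nseq m true ++ false :: y -> n = m /\ x = y.
Proof. by elim: n m => [|n IH] [|m] //= [] // /IH [-> ->]. Qed.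

Definition vertex_pairs n : seq ('I_n * 'I_n) :=
  [seq (i, j) | i : 'I_n <- enum 'I_n, j : 'I_n <- [seq j : 'I_n <- enum 'I_n | i < j]].

Lemma mem_vertex_pairs n (i j : 'I_n) : ((i, j) \in vertex_pairs n) = (i < j).
Proof.
apply/allpairsPdep/idP => [[i' [j' [_ + [-> ->]]]]|ij]; first by rewrite mem_filter => /andP [].
by exists i, j; split; rewrite ?mem_enum // mem_filter ij mem_enum.
Qed.

Lemma vertex_pairs_uniq n : uniq (vertex_pairs n).
Proof.
apply: allpairs_uniq_dep; first exact: enum_uniq.
  by move=> i _; apply/filter_uniq/enum_uniq.
by move=> [i j] [i' j'] _ _ /= [Ei Ej]; subst i'; rewrite Ej.
Qed.

Definition pair_blocks n (T : Type) (blk : 'I_n -> 'I_n -> T) : seq T :=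
  [seq blk ij.1 ij.2 | ij <- vertex_pairs n].

Lemma pairs_encE n blk : pairs_enc n blk = nseq n true ++ false :: flatten (pair_blocks blk).
Proof. by rewrite /pair_blocks map_allpairs. Qed.

Lemma size_pair_blocks n (T T' : Type) (blk : 'I_n -> 'I_n -> T) (blk' : 'I_n -> 'I_n -> T') :
  size (pair_blocks blk) = size (pair_blocks blk').
Proof. by rewrite !size_map. Qed.

Lemma all_pair_blocks n (T : Type) (P : pred T) (blk : 'I_n -> 'I_n -> T) :
  (forall i j : 'I_n, i < j -> P (blk i j)) -> all P (pair_blocks blk).
Proof. by move=> H; rewrite all_map; apply/allP => -[i j] ij; apply: H; rewrite -mem_vertex_pairs. Qed.

Lemma pair_blocks_onto n (T : Type) (x0 : T) (bs : seq T) :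
  size bs = size (vertex_pairs n) ->
  bs = pair_blocks (fun i j => nth x0 bs (index (i, j) (vertex_pairs n))).
Proof.
move=> S; rewrite -{1}(map_nth_index x0 (vertex_pairs_uniq n) S).
by apply: eq_map => -[i j].
Qed.

Lemma eq_pairs_enc n (blk blk' : 'I_n -> 'I_n -> seq bool) :
  (forall i j : 'I_n, i < j -> blk i j = blk' i j) -> pairs_enc n blk = pairs_enc n blk'.
Proof.
move=> E; rewrite !pairs_encE; congr (_ ++ _ :: flatten _).
by apply/eq_in_map => -[i j]; rewrite mem_vertex_pairs => /E.
Qed.

Lemma pairs_enc_nil n blk : pairs_enc n blk <> [::].
Proof. by rewrite pairs_encE; case: n blk. Qed.

Lemma pairs_enc_order n m blk blk' : pairs_enc n blk = pairs_enc m blk' -> n = m.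
Proof. by rewrite !pairs_encE => /unary_prefix_inj []. Qed.

Lemma pairs_enc_inj n q (blk blk' : 'I_n -> 'I_n -> seq bool) :
  (forall i j : 'I_n, i < j -> size (blk i j) = q) ->
  (forall i j : 'I_n, i < j -> size (blk' i j) = q) ->
  pairs_enc n blk = pairs_enc n blk' -> forall i j : 'I_n, i < j -> blk i j = blk' i j.
Proof.
move=> Sz Sz'; rewrite !pairs_encE => /unary_prefix_inj [_].
move/(@flatten_inj_const _ q) => E i j ij.
have /eq_in_map Eb : pair_blocks blk = pair_blocks blk'.
  apply: E; rewrite ?(size_pair_blocks blk blk') //.
    by apply: all_pair_blocks => i' j' /Sz ->.
  by apply: all_pair_blocks => i' j' /Sz' ->.
by apply: (Eb (i, j)); rewrite mem_vertex_pairs.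
Qed.

Lemma block_map_pairs_enc p valid g n (blk : 'I_n -> 'I_n -> seq bool) :
  (forall i j : 'I_n, i < j -> good_block p valid (blk i j)) ->
  block_map p valid g (pairs_enc n blk) = pairs_enc n (fun i j => g (blk i j)).
Proof.
by move=> H; rewrite !pairs_encE block_map_blocks ?all_pair_blocks // -map_comp.
Qed.

Lemma block_map_pairs_enc_inv p valid g q m (blk : 'I_m -> 'I_m -> seq bool) s :
  block_map p valid g s = pairs_enc m blk ->
  0 < q -> (forall w, size w = p.+1 -> size (g w) = q) ->
  (forall i j : 'I_m, i < j -> size (blk i j) = q) ->
  exists2 c : 'I_m -> 'I_m -> seq bool,
    s = pairs_enc m c & forall i j : 'I_m, i < j -> good_block p valid (c i j).
Proof.
move=> E q0 Sg Sblk.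
have NE : block_map p valid g s <> [::] by rewrite E; apply: pairs_enc_nil.
have [n [bs [Es A Eb]]] := block_map_inv NE; subst s.
move: E; rewrite Eb pairs_encE => /unary_prefix_inj [En Ef]; subst n.
have Sbs : size bs = size (vertex_pairs m).
  have Abs : all (fun w => size w == q) (map g bs).
    by rewrite all_map; apply: sub_all A => w /andP [/eqP /Sg Sw _]; rewrite /= Sw.
  have Ablk : all (fun w => size w == q) (pair_blocks blk).
    by apply: all_pair_blocks => i j /Sblk ->.
  move: (size_flatten_const Abs) (size_flatten_const Ablk); rewrite Ef !size_map => -> /eqP.
  by rewrite eqn_pmul2l // => /eqP.
exists (fun i j => nth [::] bs (index (i, j) (vertex_pairs m))).
  by rewrite pairs_encE -pair_blocks_onto.
move=> i j ij; apply: (allP A); apply: mem_nth.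
by rewrite Sbs index_mem mem_vertex_pairs.
Qed.

(** * Orientations *)

Lemma funext2 (A B C : Type) (f g : A -> B -> C) : f =2 g -> f = g.
Proof. by move=> E; do 2 (apply: functional_extensionality => ?); rewrite E. Qed.

Definition orient (X : ugraph) : ograph.
Proof.
refine (OGraph (uv X) (fun i j => (i < j) && uadj i j) _ _).
- by move=> x; rewrite ltnn.
- by move=> x y /andP [H _]; rewrite ltnNge ltnW.
Defined.

Definition underlying (Y : ograph) : ugraph.
Proof.
refine (UGraph (ov Y) (fun i j => oarc i j || oarc j i) _ _).
- by move=> x y; rewrite orbC.
- by move=> x; rewrite oarc_irr.
Defined.

Lemma underlying_orient_adj X (x y : 'I_(uv X)) : @uadj (underlying (orient X)) x y = uadj x y.
Proof.
rewrite /= [uadj y x]uadj_sym; case: (ltngtP x y) => [||/val_inj ->]; rewrite ?orbF //.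
by rewrite uadj_irr.
Qed.

Section ArcSym.
Variables (Y : ograph) (T : Type) (c : 'I_(ov Y) -> 'I_(ov Y) -> T).

(* The value of [c] on the arc joining [u] and [v]; on non-adjacent pairs the
   choice only serves to make the function symmetric. *)
Definition arc_sym u v : T :=
  if oarc u v then c u v else if oarc v u then c v u else if u <= v then c u v else c v u.

Lemma arc_symC u v : arc_sym u v = arc_sym v u.
Proof.
rewrite /arc_sym; case Auv: (oarc u v); first by rewrite (oarc_asym _ _ _ Auv).
case: (oarc v u) => //.
by case: (ltngtP u v) => [||/val_inj ->].
Qed.

Lemma arc_sym_arc u v : oarc u v -> arc_sym u v = c u v.
Proof. by rewrite /arc_sym => ->. Qed.

Lemma arc_sym_arcV u v : oarc v u -> arc_sym u v = c v u.
Proof. by move=> A; rewrite arc_symC arc_sym_arc. Qed.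

Lemma arc_sym_id : (forall u v, c u v = c v u) -> arc_sym = c.
Proof.
move=> cC; apply: funext2 => u v.
by rewrite /arc_sym (cC v u); case: ifP => //; case: ifP => //; case: ifP.
Qed.

End ArcSym.

Section Families.
Variable r : nat.

Definition underlying_col (F : ocgraph r) : ucgraph r :=
  UCGraph r (underlying (ocg F)) (arc_sym (ocol F)) (@arc_symC _ _ (ocol F)).

Definition oriented_family (Fam : ucgraph r -> Prop) (F : ocgraph r) : Prop :=
  Fam (underlying_col F).

Definition orient_by (F : ucgraph r) (P : rel 'I_(uv (ucg F))) : ocgraph r.
Proof.
refine (OCGraph r (OGraph (uv (ucg F)) (fun u v => [&& uadj u v, P u v & ~~ P v u]) _ _) (ucol F)).
- by move=> x; rewrite andbN !andbF.
- by move=> x y /and3P [_ H1 H2]; rewrite H1 !andbF.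
Defined.
Arguments orient_by : clear implicits.

Lemma ucgraph_ext n (a1 a2 : 'I_n -> 'I_n -> bool) s1 i1 s2 i2 (c1 c2 : 'I_n -> 'I_n -> 'I_r) p1 p2 :
  a1 =2 a2 -> c1 =2 c2 -> UCGraph r (UGraph n a1 s1 i1) c1 p1 = UCGraph r (UGraph n a2 s2 i2) c2 p2.
Proof.
move=> /funext2 Ea /funext2 Ec; subst a2 c2.
by rewrite (proof_irrelevance _ s1 s2) (proof_irrelevance _ i1 i2) (proof_irrelevance _ p1 p2).
Qed.

Lemma underlying_col_orient_by F P : (forall u v, uadj u v -> P u v != P v u) ->
  underlying_col (orient_by F P) = F.
Proof.
case: F P => [[n adj sym irr] col csym] /= P HP.
apply: ucgraph_ext => x y /=.
- rewrite [adj y x]sym; case A: (adj x y) => //=; have := HP _ _ A.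
  by case: (P x y); case: (P y x).
- rewrite /arc_sym /= [adj y x]sym [col y x]csym.
  by case: (adj x y); case: (P x y); case: (P y x) => //=; case: (x <= y).
Qed.

End Families.
Arguments orient_by {r} F P.

Section Orientation.
Variables (r : nat) (Fam : ucgraph r -> Prop).
Local Notation OFam := (oriented_family Fam).

(* A homomorphism from an undirected [F] into the underlying graph of [Y] orients
   [F] by pulling back the arcs of [Y]. *)
Lemma ofree_underlying (Y : ograph) gam :
  ofree r OFam Y gam <-> ufree r Fam (underlying Y) (arc_sym gam).
Proof.
split=> nfree [F [h [HF Hh]]]; apply: nfree.
- exists (orient_by F (fun u v => oarc (h u) (h v))), h; split.
  + rewrite /oriented_family underlying_col_orient_by // => u v /Hh [/orP [] A _];
      by rewrite A (oarc_asym _ _ _ A).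
  + move=> u v /and3P [A B _]; have [_ G] := Hh u v A.
    by split=> //=; rewrite -G arc_sym_arc.
- exists (underlying_col F), h; split => // u v /orP [] A; have [E G] := Hh _ _ A.
  + by rewrite /= E arc_sym_arc // arc_sym_arc.
  + by rewrite /= E orbT !arc_sym_arcV.
Qed.

Lemma ufree_underlying_orient X gam : ufree r Fam (underlying (orient X)) gam <-> ufree r Fam X gam.
Proof.
by split=> nfree [F [h [HF Hh]]]; apply: nfree; exists F, h; split => // u v /Hh;
  rewrite underlying_orient_adj.
Qed.

Lemma ucolorable_orient X : ucolorable r Fam X <-> ocolorable r OFam (orient X).
Proof.
split=> [[gam [gamC nfree]]|[gam nfree]].
- by exists gam; rewrite ofree_underlying arc_sym_id // ufree_underlying_orient.
- exists (arc_sym gam); split; first exact: (arc_symC gam).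
  by rewrite -ufree_underlying_orient -ofree_underlying.
Qed.

Lemma ocolorable_underlying Y : ocolorable r OFam Y <-> ucolorable r Fam (underlying Y).
Proof.
split=> [[gam nfree]|[gam [gamC nfree]]].
- exists (arc_sym gam); split; first exact: (arc_symC gam).
  by rewrite -ofree_underlying.
- by exists gam; rewrite ofree_underlying arc_sym_id.
Qed.

Definition orient_pre X (xi : 'I_(uv X) -> 'I_(uv X) -> option 'I_r) :
    'I_(ov (orient X)) -> 'I_(ov (orient X)) -> option 'I_r :=
  fun i j => if i < j then xi i j else None.

Definition underlying_pre Y (xi : 'I_(ov Y) -> 'I_(ov Y) -> option 'I_r) :
    'I_(uv (underlying Y)) -> 'I_(uv (underlying Y)) -> option 'I_r :=
  fun i j => if oarc i j then xi i j else xi j i.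

Lemma opartial_orient X xi : upartial r X xi -> opartial r (orient X) (orient_pre xi).
Proof. by move=> [_ xiN] x y /=; rewrite /orient_pre; case: ifP => //= _ /xiN. Qed.

Lemma upartial_underlying Y xi : opartial r Y xi -> upartial r (underlying Y) (underlying_pre xi).
Proof.
move=> xiN; split=> x y; rewrite /underlying_pre.
- case A: (oarc x y); first by rewrite (oarc_asym _ _ _ A).
  by case B: (oarc y x) => //; rewrite !xiN ?A ?B.
- by rewrite /= negb_or => /andP [/negbTE -> B]; rewrite xiN.
Qed.

Lemma uextendable_orient X xi : upartial r X xi ->
  uextendable r Fam X xi <-> oextendable r OFam (orient X) (orient_pre xi).
Proof.
move=> [xiC xiN]; split=> [[gam [gamC gam_xi nfree]]|[gam [gam_xi nfree]]].
- exists gam; split; first by move=> x y c; rewrite /orient_pre; case: ifP => // _ /gam_xi.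
  by rewrite ofree_underlying arc_sym_id // ufree_underlying_orient.
- exists (arc_sym gam); split.
  + exact: (arc_symC gam).
  + move=> x y c E; have A : uadj x y by case A: (uadj x y); rewrite // xiN ?A in E.
    case: (ltngtP x y) => [xy|yx|/val_inj Exy]; last by rewrite Exy uadj_irr in A.
    * have Axy : @oarc (orient X) x y by apply/andP.
      by rewrite arc_sym_arc //; apply: gam_xi; rewrite /orient_pre xy.
    * have Ayx : @oarc (orient X) y x by rewrite /= yx uadj_sym.
      by rewrite arc_sym_arcV //; apply: gam_xi; rewrite /orient_pre yx xiC.
  + by rewrite -ufree_underlying_orient -ofree_underlying.
Qed.

Lemma oextendable_underlying Y xi : opartial r Y xi ->
  oextendable r OFam Y xi <-> uextendable r Fam (underlying Y) (underlying_pre xi).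
Proof.
move=> xiN; split=> [[gam [gam_xi nfree]]|[gam [gamC gam_xi nfree]]].
- exists (arc_sym gam); split.
  + exact: (arc_symC gam).
  + move=> x y c; rewrite /underlying_pre.
    case A: (oarc x y); first by rewrite arc_sym_arc // => /gam_xi.
    case B: (oarc y x); last by rewrite xiN ?B.
    by rewrite arc_sym_arcV // => /gam_xi.
  + by rewrite -ofree_underlying.
- exists gam; split; last by rewrite ofree_underlying arc_sym_id.
  move=> x y c E; apply: gam_xi; rewrite /underlying_pre.
  by case A: (oarc x y); rewrite // xiN ?A in E.
Qed.

End Orientation.

(** * The reductions *)

Section PairFunctions.
Variables (n : nat) (T : Type).
Implicit Types i j : 'I_n.

Definition sym_pairs (f : 'I_n -> 'I_n -> T) (d : T) (i j : 'I_n) : T :=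
  if i < j then f i j else if j < i then f j i else d.

Lemma sym_pairsC f d i j : sym_pairs f d i j = sym_pairs f d j i.
Proof. by rewrite /sym_pairs; case: (ltngtP i j). Qed.

Lemma sym_pairs_lt f d i j : i < j -> sym_pairs f d i j = f i j.
Proof. by rewrite /sym_pairs => ->. Qed.

Lemma sym_pairs_diag f d i : sym_pairs f d i i = d.
Proof. by rewrite /sym_pairs ltnn. Qed.

Lemma eq_on_pairs (f g : 'I_n -> 'I_n -> T) :
  (forall i j, i < j -> f i j = g i j /\ f j i = g j i) -> (forall i, f i i = g i i) -> f =2 g.
Proof. by move=> E Ed i j; case: (ltngtP i j) => [/E []|/E []|/val_inj ->]. Qed.

Lemma eq_on_sym_pairs (f g : 'I_n -> 'I_n -> T) :
  (forall i j, f i j = f j i) -> (forall i j, g i j = g j i) ->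
  (forall i j, i < j -> f i j = g i j) -> (forall i, f i i = g i i) -> f =2 g.
Proof.
move=> fC gC E; apply: eq_on_pairs => i j ij; split; first exact: E.
by rewrite fC gC; apply: E.
Qed.

End PairFunctions.

Definition ugraph_of_pairs n (f : 'I_n -> 'I_n -> bool) : ugraph :=
  UGraph n (sym_pairs f false) (sym_pairsC f false) (sym_pairs_diag f false).

(* For [i < j], [f i j] and [g i j] give the arcs [i -> j] and [j -> i]; the
   latter is dropped if both are set. *)
Definition ograph_of_pairs n (f g : 'I_n -> 'I_n -> bool) : ograph.
Proof.
refine (OGraph n (fun i j => if i < j then f i j else if j < i then g j i && ~~ f j i else false) _ _).
- by move=> x; rewrite ltnn.
- move=> x y; case: (ltngtP x y) => //= H; first by move=> ->; rewrite andbF.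
  by case/andP => _ /negbTE.
Defined.

Lemma ugraph_ext n (a1 a2 : 'I_n -> 'I_n -> bool) s1 i1 s2 i2 :
  a1 =2 a2 -> UGraph n a1 s1 i1 = UGraph n a2 s2 i2.
Proof.
move=> /funext2 Ea; subst a2.
by rewrite (proof_irrelevance _ s1 s2) (proof_irrelevance _ i1 i2).
Qed.

Lemma ograph_ext n (a1 a2 : 'I_n -> 'I_n -> bool) s1 i1 s2 i2 :
  a1 =2 a2 -> OGraph n a1 s1 i1 = OGraph n a2 s2 i2.
Proof.
move=> /funext2 Ea; subst a2.
by rewrite (proof_irrelevance _ s1 s2) (proof_irrelevance _ i1 i2).
Qed.

Lemma eq_sigT_transfer (A : Type) (P : A -> Type) (Q : forall a, P a -> Prop) a a' x x' :
  existT P a x = existT P a' x' -> Q a x -> Q a' x'.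
Proof.
pose R (s : sigT P) := Q (projT1 s) (projT2 s).
by move=> E; change (R (existT P a x) -> R (existT P a' x')); rewrite E.
Qed.

Lemma enc_ucol_inj : injective enc_ucol.
Proof.
move=> [m a s i] [m' a' s' i']; rewrite /enc_ucol /= => E.
have Em := pairs_enc_order E; subst m'.
have Eb : forall x y : 'I_m, x < y -> [:: a x y] = [:: a' x y] by apply: (pairs_enc_inj (q := 1)) E.
apply: ugraph_ext; apply: (eq_on_sym_pairs s s') => [x y /Eb [] //|x].
by rewrite i i'.
Qed.

Lemma enc_ocol_inj : injective enc_ocol.
Proof.
move=> [m a s i] [m' a' s' i']; rewrite /enc_ocol /= => E.
have Em := pairs_enc_order E; subst m'.
have Eb : forall x y : 'I_m, x < y -> [:: a x y; a y x] = [:: a' x y; a' y x].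
  by apply: (pairs_enc_inj (q := 2)) E.
apply: ograph_ext; apply: eq_on_pairs => [x y xy|x]; last by rewrite s s'.
by case: (Eb _ _ xy) => -> ->.
Qed.

Lemma size_onehot r o : size (onehot r o) = r.
Proof. by rewrite size_map size_enum_ord. Qed.

Lemma nth_onehot r o (c : 'I_r) : nth false (onehot r o) c = (o == Some c).
Proof. by rewrite (nth_map c) ?size_enum_ord // nth_ord_enum. Qed.

Definition unhot r (w : seq bool) : option 'I_r := [pick c : 'I_r | nth false w c].

Lemma onehotK r : cancel (onehot r) (unhot r).
Proof.
move=> o; rewrite /unhot; case: pickP => [c|none]; first by rewrite nth_onehot => /eqP.
by case: o none => // c /(_ c); rewrite nth_onehot eqxx.
Qed.

Lemma onehot_inj r : injective (onehot r).
Proof. exact: can_inj (@onehotK r). Qed.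

Section PrecoloredEncodings.
Variable r : nat.

Definition uinstance := {X : ugraph & 'I_(uv X) -> 'I_(uv X) -> option 'I_r}.
Definition oinstance := {Y : ograph & 'I_(ov Y) -> 'I_(ov Y) -> option 'I_r}.

Lemma enc_uext_inj X X' xi xi' : upartial r X xi -> upartial r X' xi' ->
  enc_uext r X xi = enc_uext r X' xi' -> existT _ X xi = existT _ X' xi' :> uinstance.
Proof.
case: X X' xi xi' => [m a s i] [m' a' s' i'] xi xi' [xiC xiN] [xiC' xiN'].
rewrite /enc_uext /= => E; have Em := pairs_enc_order E; subst m'.
have Eb : forall x y : 'I_m, x < y -> a x y :: onehot r (xi x y) = a' x y :: onehot r (xi' x y).
  by apply: (pairs_enc_inj (q := r.+1)) E => x y _; rewrite /= size_onehot.
have /funext2 Ea : a =2 a'.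
  by apply: (eq_on_sym_pairs s s') => [x y /Eb [] //|x]; rewrite i i'.
subst a'; have /funext2 Exi : xi =2 xi'.
  apply: (eq_on_sym_pairs xiC xiC') => [x y /Eb [] /onehot_inj //|x].
  by rewrite xiN ?xiN' //= i.
by subst xi'; rewrite (proof_irrelevance _ s' s) (proof_irrelevance _ i' i).
Qed.

Lemma enc_oext_inj Y Y' xi xi' : opartial r Y xi -> opartial r Y' xi' ->
  enc_oext r Y xi = enc_oext r Y' xi' -> existT _ Y xi = existT _ Y' xi' :> oinstance.
Proof.
case: Y Y' xi xi' => [m a i s] [m' a' i' s'] xi xi' xiN xiN'.
rewrite /enc_oext /= => E; have Em := pairs_enc_order E; subst m'.
have Eblk : forall x y : 'I_m, x < y ->
    a x y :: a y x :: onehot r (xi x y) ++ onehot r (xi y x) =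
    a' x y :: a' y x :: onehot r (xi' x y) ++ onehot r (xi' y x).
  by apply: (pairs_enc_inj (q := (r + r).+2)) E => x y _; rewrite /= size_cat !size_onehot.
have Eb : forall x y : 'I_m, x < y ->
    [/\ a x y = a' x y, a y x = a' y x, xi x y = xi' x y & xi y x = xi' y x].
  move=> x y /Eblk [-> -> /eqP]; rewrite eqseq_cat ?size_onehot //.
  by case/andP => /eqP /onehot_inj -> /eqP /onehot_inj ->.
have /funext2 Ea : a =2 a'.
  apply: eq_on_pairs => [x y /Eb []|x] //; by rewrite i i'.
subst a'; have /funext2 Exi : xi =2 xi'.
  apply: eq_on_pairs => [x y /Eb []|x] //; by rewrite xiN ?xiN' //= i.
by subst xi'; rewrite (proof_irrelevance _ s' s) (proof_irrelevance _ i' i).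
Qed.

End PrecoloredEncodings.

Definition orient_block (w : seq bool) := [:: head false w; false].

Lemma orient_block_map X : block_map 0 predT orient_block (enc_ucol X) = enc_ocol (orient X).
Proof.
rewrite block_map_pairs_enc //; apply: eq_pairs_enc => i j ij /=.
by rewrite ij ltnNge ltnW.
Qed.

Lemma orient_block_map_inv x Y : block_map 0 predT orient_block x = enc_ocol Y ->
  exists X, x = enc_ucol X /\ orient X = Y.
Proof.
move=> E; have [c Ex Hc] :=
  block_map_pairs_enc_inv (q := 2) E isT (fun _ _ => erefl) (fun _ _ _ => erefl); subst x.
set X := ugraph_of_pairs (fun i j => head false (c i j)).
have EX : pairs_enc _ c = enc_ucol X.
  apply: eq_pairs_enc => i j ij /=; rewrite sym_pairs_lt //.
  by move: (Hc i j ij) => /andP [/eqP]; case: (c i j) => // b [].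
by exists X; split => //; apply: enc_ocol_inj; rewrite -E EX orient_block_map.
Qed.

Definition ocol_block_ok (w : seq bool) := ~~ (nth false w 0 && nth false w 1).
Definition underlying_block (w : seq bool) := [:: nth false w 0 || nth false w 1].

Lemma underlying_block_map Y :
  block_map 1 ocol_block_ok underlying_block (enc_ocol Y) = enc_ucol (underlying Y).
Proof.
rewrite block_map_pairs_enc // => i j _; rewrite /good_block /ocol_block_ok /=.
by case A: (oarc i j) => //=; rewrite (oarc_asym _ _ _ A).
Qed.

Lemma underlying_block_map_inv x X : block_map 1 ocol_block_ok underlying_block x = enc_ucol X ->
  exists Y, x = enc_ocol Y /\ underlying Y = X.
Proof.
move=> E; have [c Ex Hc] :=
  block_map_pairs_enc_inv (q := 1) E isT (fun _ _ => erefl) (fun _ _ _ => erefl); subst x.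
set Y := ograph_of_pairs (fun i j => nth false (c i j) 0) (fun i j => nth false (c i j) 1).
have EY : pairs_enc _ c = enc_ocol Y.
  apply: eq_pairs_enc => i j ij /=; rewrite ij ltnNge ltnW //=.
  move: (Hc i j ij); rewrite /good_block /ocol_block_ok.
  by case: (c i j) => [|a [|b []]] //=; case: a; case: b.
by exists Y; split => //; apply: enc_ucol_inj; rewrite -E EY underlying_block_map.
Qed.

Section PrecoloredBlocks.
Variable r : nat.

Definition uext_block_ok (w : seq bool) :=
  [exists v : option 'I_r, (behead w == onehot r v) && (head false w || (v == None))].

Definition orient_pre_block (w : seq bool) := head false w :: false :: behead w ++ onehot r None.

Lemma size_orient_pre_block w : size w = r.+1 -> size (orient_pre_block w) = (r + r).+2.
Proof. by case: w => // a w [Sw]; rewrite /= size_cat Sw size_onehot. Qed.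

Lemma good_uext_block w : good_block r uext_block_ok w ->
  exists a v, w = a :: onehot r v /\ (a || (v == None)).
Proof. by case: w => // a o /andP [_ /existsP [v /andP [/eqP /= -> H]]]; exists a, v. Qed.

Lemma orient_pre_block_map X xi : upartial r X xi ->
  block_map r uext_block_ok orient_pre_block (enc_uext r X xi) = enc_oext r (orient X) (orient_pre xi).
Proof.
move=> [_ xiN]; rewrite block_map_pairs_enc => [|i j _]; last first.
  rewrite /good_block /= size_onehot eqxx; apply/existsP; exists (xi i j); rewrite eqxx /=.
  by case A: (uadj i j) => //=; rewrite xiN ?A.
by apply: eq_pairs_enc => i j ij; rewrite /= /orient_pre ij ltnNge ltnW.
Qed.

Lemma orient_pre_block_map_inv x Y xi : opartial r Y xi ->
  block_map r uext_block_ok orient_pre_block x = enc_oext r Y xi ->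
  exists X xiX, [/\ upartial r X xiX, x = enc_uext r X xiX
    & existT _ (orient X) (orient_pre xiX) = existT _ Y xi :> oinstance r].
Proof.
move=> xiN E; have [c Ex Hc] := block_map_pairs_enc_inv (q := (r + r).+2) E isT
  size_orient_pre_block (fun _ _ _ => ltac:(by rewrite /= size_cat !size_onehot)); subst x.
set X := ugraph_of_pairs (fun i j => head false (c i j)).
set xiX : 'I_(uv X) -> 'I_(uv X) -> option 'I_r := sym_pairs (fun i j => unhot r (behead (c i j))) None.
have PX : upartial r X xiX.
  split=> [x y|x y]; first exact: sym_pairsC.
  rewrite /= /xiX /sym_pairs; case: (ltngtP x y) => // H;
    have [a [v [-> /= Hv]]] := good_uext_block (Hc _ _ H);
    by rewrite onehotK => Na; rewrite (negbTE Na) in Hv; apply/eqP.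
have EX : pairs_enc _ c = enc_uext r X xiX.
  apply: eq_pairs_enc => i j ij; rewrite /= /xiX !sym_pairs_lt //.
  by have [a [v [-> _]]] := good_uext_block (Hc _ _ ij); rewrite /= onehotK.
exists X, xiX; split => //; apply: enc_oext_inj => //; first exact: opartial_orient.
by rewrite -E EX orient_pre_block_map.
Qed.

Definition oext_block_ok (w : seq bool) := [exists v1 : option 'I_r, exists v2 : option 'I_r,
  [&& drop 2 w == onehot r v1 ++ onehot r v2, ~~ (nth false w 0 && nth false w 1),
      nth false w 0 || (v1 == None) & nth false w 1 || (v2 == None)]].

Definition underlying_pre_block (w : seq bool) := (nth false w 0 || nth false w 1) ::
  (if nth false w 1 then drop r (drop 2 w) else take r (drop 2 w)).

Lemma size_underlying_pre_block w : size w = (r + r).+2 -> size (underlying_pre_block w) = r.+1.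
Proof.
case: w => [|a [|b w]] // [Sw]; rewrite /underlying_pre_block /= !drop0; case: b.
- by rewrite size_drop Sw; lia.
- by rewrite size_take Sw; case: ltnP => //; lia.
Qed.

Lemma good_oext_block w : good_block (r + r).+1 oext_block_ok w -> exists a b v1 v2,
  [/\ w = a :: b :: onehot r v1 ++ onehot r v2, ~~ (a && b), a || (v1 == None) & b || (v2 == None)].
Proof.
case: w => [|a [|b w]] // /andP [_ /existsP [v1 /existsP [v2]]].
by rewrite /= drop0 => /and4P [/eqP -> H1 H2 H3]; exists a, b, v1, v2.
Qed.

Lemma underlying_pre_block_map Y xi : opartial r Y xi ->
  block_map (r + r).+1 oext_block_ok underlying_pre_block (enc_oext r Y xi) =
  enc_uext r (underlying Y) (underlying_pre xi).
Proof.
move=> xiN; rewrite block_map_pairs_enc => [|i j _]; last first.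
  rewrite /good_block /= size_cat !size_onehot eqxx /=.
  apply/existsP; exists (xi i j); apply/existsP; exists (xi j i); rewrite /= drop0 eqxx /=.
  case A: (oarc i j); first by have B := oarc_asym _ _ _ A; rewrite B /= xiN ?B.
  by case B: (oarc j i); rewrite //= !xiN ?A ?B.
apply: eq_pairs_enc => i j ij; rewrite /underlying_pre_block /underlying_pre /= drop0.
rewrite drop_size_cat ?size_onehot // take_size_cat ?size_onehot //.
case B: (oarc j i); first by rewrite (oarc_asym _ _ _ B).
by case A: (oarc i j); rewrite // !xiN ?A ?B.
Qed.

Lemma underlying_pre_block_map_inv x X xi : upartial r X xi ->
  block_map (r + r).+1 oext_block_ok underlying_pre_block x = enc_uext r X xi ->
  exists Y xiY, [/\ opartial r Y xiY, x = enc_oext r Y xiY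
    & existT _ (underlying Y) (underlying_pre xiY) = existT _ X xi :> uinstance r].
Proof.
move=> PX E; have [c Ex Hc] := block_map_pairs_enc_inv (q := r.+1) E isT
  size_underlying_pre_block (fun _ _ _ => ltac:(by rewrite /= size_onehot)); subst x.
set Y := ograph_of_pairs (fun i j => nth false (c i j) 0) (fun i j => nth false (c i j) 1).
set xiY : 'I_(ov Y) -> 'I_(ov Y) -> option 'I_r := fun i j =>
  if i < j then unhot r (take r (drop 2 (c i j)))
  else if j < i then unhot r (drop r (drop 2 (c j i))) else None.
have PY : opartial r Y xiY.
  move=> x y; rewrite /= /xiY; case: (ltngtP x y) => // H;
    have [a [b [v1 [v2 [-> /= H1 H2 H3]]]]] := good_oext_block (Hc _ _ H).
  - rewrite drop0 take_size_cat ?size_onehot // onehotK => Na.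
    by rewrite (negbTE Na) /= in H2; apply/eqP.
  - rewrite drop0 drop_size_cat ?size_onehot // onehotK.
    by case: b H1 H3 => //=; [rewrite andbT => -> | move=> _ /eqP].
have EY : pairs_enc _ c = enc_oext r Y xiY.
  apply: eq_pairs_enc => i j ij; rewrite /= /xiY ij ltnNge ltnW //=.
  have [a [b [v1 [v2 [-> /= H1 _ _]]]]] := good_oext_block (Hc _ _ ij).
  rewrite drop0 drop_size_cat ?take_size_cat ?size_onehot // !onehotK.
  by case: a b H1 => [] [].
exists Y, xiY; split => //; apply: enc_uext_inj => //; first exact: upartial_underlying.
by rewrite -E EY underlying_pre_block_map.
Qed.

End PrecoloredBlocks.

Section Reductions.
Variables (r : nat) (Fam : ucgraph r -> Prop).
Local Notation OFam := (oriented_family Fam).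

Lemma ColU_reduces_ColO : poly_reduces (ColU r Fam) (ColO r OFam).
Proof.
exists (block_map 0 predT orient_block); split.
  by apply: (block_map_poly predT (q := 2)).
move=> x; split=> [[X [<- HX]]|[Y [EY HY]]].
- by exists (orient X); rewrite orient_block_map -ucolorable_orient.
- have [X [-> EX]] := orient_block_map_inv (esym EY).
  by exists X; rewrite ucolorable_orient EX.
Qed.

Lemma ColO_reduces_ColU : poly_reduces (ColO r OFam) (ColU r Fam).
Proof.
exists (block_map 1 ocol_block_ok underlying_block); split.
  by apply: (block_map_poly ocol_block_ok (q := 1)).
move=> x; split=> [[Y [<- HY]]|[X [EX HX]]].
- by exists (underlying Y); rewrite underlying_block_map -ocolorable_underlying.
- have [Y [-> EY]] := underlying_block_map_inv (esym EX).
  by exists Y; rewrite ocolorable_underlying EY.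
Qed.

Lemma ExtU_reduces_ExtO : poly_reduces (ExtU r Fam) (ExtO r OFam).
Proof.
exists (block_map r (uext_block_ok r) (orient_pre_block r)); split.
  by apply: block_map_poly; exact: size_orient_pre_block.
move=> x; split=> [[X [xi [PX <- HX]]]|[Y [xi [PY EY HY]]]].
- exists (orient X), (orient_pre xi); split; first exact: opartial_orient.
    by rewrite orient_pre_block_map.
  by rewrite -uextendable_orient.
- have [X [xiX [PX -> E]]] := orient_pre_block_map_inv PY (esym EY).
  exists X, xiX; split => //; rewrite uextendable_orient //.
  exact: (eq_sigT_transfer (Q := oextendable r OFam) (esym E)).
Qed.

Lemma ExtO_reduces_ExtU : poly_reduces (ExtO r OFam) (ExtU r Fam).
Proof.
exists (block_map (r + r).+1 (oext_block_ok r) (underlying_pre_block r)); split.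
  by apply: block_map_poly; exact: size_underlying_pre_block.
move=> x; split=> [[Y [xi [PY <- HY]]]|[X [xi [PX EX HX]]]].
- exists (underlying Y), (underlying_pre xi); split; first exact: upartial_underlying.
    by rewrite underlying_pre_block_map.
  by rewrite -oextendable_underlying.
- have [Y [xiY [PY -> E]]] := underlying_pre_block_map_inv PX (esym EX).
  exists Y, xiY; split => //; rewrite oextendable_underlying //.
  exact: (eq_sigT_transfer (Q := uextendable r Fam) (esym E)).
Qed.

End Reductions.

Theorem proposition7 (r : nat) (Fam : ucgraph r -> Prop) :
  exists OFam : ocgraph r -> Prop,
    poly_equiv (ColU r Fam) (ColO r OFam) /\ poly_equiv (ExtU r Fam) (ExtO r OFam).
Proof.
exists (oriented_family Fam); split; split.
- exact: ColU_reduces_ColO.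
- exact: ColO_reduces_ColU.
- exact: ExtU_reduces_ExtO.
- exact: ExtO_reduces_ExtU.
Qed.
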